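(* Let $A=K[X_1,\ldots,X_n]$ over a field $K$, let $d$ be a positive integer, let $W$ be a $K$-vector subspace of $A_d$, and let $\omega=(\omega_1,\ldots,\omega_n)\in\mathbb Z^n$ be a weight with $\omega_1\geq\cdots\geq\omega_n\geq 0$. Then for every integer $0\leq a\leq\omega_1 d$, the dimension of the homogeneous component of weight $a$ of $\operatorname{in}_\omega(W)$ equals $\operatorname{rk}^{S_a}W-\operatorname{rk}^{S_{a+1}}W$. Furthermore, if $W$ is homogeneous with respect to $\omega$ and $b\in\mathcal B$, then $\alpha_\omega(bW)\geq\alpha_\omega(W)$ (componentwise).
   Context: $A_d$ is the space of homogeneous polynomials of degree $d$. The weight of a monomial $\mathbf X^{\mathbf a}$ is $\omega\cdot\mathbf a$. For $0\leq a\leq\omega_1d+1$, $S_a$ is the set of monomials in $A_d$ of weight strictly less than $a$. For a finite set $S$ of monomials and a subspace $W$, $\operatorname{rk}^S W=\dim_K (W+\langle S\rangle)/\langle S\rangle$, where $\langle S\rangle$ is the $K$-span of $S$. Define $\alpha_\omega(W)=(\operatorname{rk}^{S_{\omega_1 d}}W,\operatorname{rk}^{S_{\omega_1 d-1}}W,\ldots,\operatorname{rk}^{S_1}W)$. The initial form $\operatorname{in}_\omega(f)$ is the sum of the terms of $f$ of maximal weight, and $\operatorname{in}_\omega(W)$ is the $K$-span of $\{\operatorname{in}_\omega(f): f\in W\}$; its homogeneous component of weight $a$ is its intersection with the span of monomials of weight $a$. $W$ is homogeneous with respect to $\omega$ if it is spanned by polynomials all of whose monomials have the same weight. $\mathcal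 B$ is the group of invertible upper-triangular $n\times n$ matrices over $K$; a matrix $b=(b_{ij})$ acts on $A$ as the linear change of coordinates $X_j\mapsto\sum_{i=1}^n b_{ij}X_i$ (so for $b\in\mathcal B$, $X_j\mapsto \sum_{i\le j}b_{ij}X_i$), and $bW$ is the image of $W$. *)

From HB Require Import structures.
From mathcomp Require Import all_boot all_order all_algebra.
From mathcomp.multinomials Require Import mpoly.
From Stdlib Require Import ClassicalEpsilon.
Set Implicit Arguments.
Unset Strict Implicit.
Unset Printing Implicit Defensive.
Import Order.TTheory GRing.Theory Num.Theory.
Local Open Scope ring_scope.

Section Lin.
Variables (K : fieldType) (V : lmodType K).

Definition inspan (s : seq V) (v : V) : Prop :=
  exists c : 'I_(size s) -> K, v = \sum_(i < size s) c i *: s`_i.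

(* [quotdim_is P Q k] : P, Q subspaces of V; dim_K (P + Q)/Q = k, i.e.
   there are k elements of P whose images in (P + Q)/Q form a basis:
   they are linearly independent modulo Q, and every element of P
   (hence every element of P + Q) is congruent modulo Q to a linear
   combination of them. *)
Definition quotdim_is (P Q : V -> Prop) (k : nat) : Prop :=
  exists t : 'I_k -> V,
    [/\ forall i, P (t i),
        forall c : 'I_k -> K, Q (\sum_(i < k) c i *: t i) -> forall i, c i = 0
      & forall v, P v -> exists c : 'I_k -> K, Q (v - \sum_(i < k) c i *: t i)].

(* dim_K (P + Q)/Q  (the chosen value when it exists; all spaces below are
   finite-dimensional) *)
Definition quotdim (P Q : V -> Prop) : nat :=
  epsilon (inhabits 0%N) (quotdim_is P Q).

Definition dimK (P : V -> Prop) : nat := quotdim P (fun v => v = 0).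

Definition is_subspace (P : V -> Prop) : Prop :=
  [/\ P 0, forall u v, P u -> P v -> P (u + v)
    & forall (c : K) v, P v -> P (c *: v)].

End Lin.

Section Poly.
Variables (n : nat) (K : fieldType).
Local Notation A := {mpoly K[n]}.

Definition in_Ad (d : nat) (p : A) : Prop :=
  forall m, m \in msupp p -> mdeg m = d.

Definition mweight (w : 'I_n -> int) (m : 'X_{1..n}) : int :=
  \sum_(i < n) w i * (m i)%:Z.

(* K-span of a (possibly infinite) set M of monomials: the polynomials
   all of whose monomials lie in M *)
Definition monspan (M : 'X_{1..n} -> Prop) (p : A) : Prop :=
  forall m, m \in msupp p -> M m.

(* <S_a> : span of the monomials of A_d of weight strictly less than a *)
Definition span_S (w : 'I_n -> int) (d : nat) (a : int) : A -> Prop :=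
  monspan (fun m => mdeg m = d /\ mweight w m < a).

Definition rkS (w : 'I_n -> int) (d : nat) (a : int) (W : A -> Prop) : nat :=
  quotdim W (span_S w d a).

Definition init_form (w : 'I_n -> int) (f : A) : A :=
  \sum_(m <- msupp f | all (fun m' => mweight w m' <= mweight w m) (msupp f))
     f@_m *: 'X_[m].

Definition init_space (w : 'I_n -> int) (W : A -> Prop) (v : A) : Prop :=
  exists s : seq A,
    (forall g, g \in s -> exists f, W f /\ g = init_form w f) /\ inspan s v.

Definition weight_comp (w : 'I_n -> int) (a : int) (U : A -> Prop) (v : A) : Prop :=
  U v /\ monspan (fun m => mweight w m = a) v.

Definition w_homog_poly (w : 'I_n -> int) (f : A) : Prop :=
  forall m m', m \in msupp f -> m' \in msupp f -> mweight w m = mweight w m'.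

(* W is homogeneous w.r.t. w : spanned by w-homogeneous polynomials
   (which may be taken in W) *)
Definition w_homog_space (w : 'I_n -> int) (W : A -> Prop) : Prop :=
  forall v, W v -> exists s : seq A,
    (forall g, g \in s -> W g /\ w_homog_poly w g) /\ inspan s v.

Definition bact (b : 'M[K]_n) (p : A) : A :=
  p \mPo [tuple \sum_(i < n) b i j *: 'X_i | j < n].

Definition bimage (b : 'M[K]_n) (W : A -> Prop) (q : A) : Prop :=
  exists p, W p /\ q = bact b p.

Definition borel (b : 'M[K]_n) : Prop :=
  b \in unitmx /\ (forall i j : 'I_n, (j < i)%N -> b i j = 0).

End Poly.

(* Modulo <S_a> a polynomial of A_d only retains its monomials of weight at
   least a.  So an element of W lying in <S_(a+1)> is determined modulo <S_a>
   by its weight-a component, which is its initial form whenever it is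
   nonzero; this makes rk^{S_a} W - rk^{S_(a+1)} W the dimension of the
   weight-a part of in_w(W).  For the Borel inequality, truncate a basis of W
   modulo <S_a> to its monomials of weight >= a: by homogeneity the truncation
   stays in W and is still free modulo <S_a>.  An upper triangular b cannot
   lower weights when w is non-increasing, and b is invertible, so the images
   under b stay free modulo <S_a> inside bW. *)

From Pilot Require Import Defs.
From HB Require Import structures.
From mathcomp Require Import all_boot all_order all_algebra zify.
From mathcomp.multinomials Require Import mpoly.
From Stdlib Require Import ClassicalEpsilon Classical.
Import Order.TTheory GRing.Theory Num.Theory.
Local Open Scope ring_scope.
Set Implicit Arguments.
Unset Strict Implicit.

(* mpoly exports a different mweight. *)
Local Notation mweight := Defs.mweight.

Definition fam_cat (T : Type) k1 k2 (t1 : 'I_k1 -> T) (t2 : 'I_k2 -> T)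
    (i : 'I_(k1 + k2)) : T :=
  match split i with inl x => t1 x | inr y => t2 y end.

Lemma fam_cat_lshift (T : Type) k1 k2 (t1 : 'I_k1 -> T) (t2 : 'I_k2 -> T) x :
  fam_cat t1 t2 (lshift k2 x) = t1 x.
Proof. by rewrite /fam_cat (unsplitK (inl x)). Qed.

Lemma fam_cat_rshift (T : Type) k1 k2 (t1 : 'I_k1 -> T) (t2 : 'I_k2 -> T) y :
  fam_cat t1 t2 (rshift k1 y) = t2 y.
Proof. by rewrite /fam_cat (unsplitK (inr y)). Qed.

Section Subspace.
Variables (K : fieldType) (V : lmodType K) (Q : V -> Prop).
Hypothesis hQ : is_subspace Q.

Lemma subspace0 : Q 0. Proof. by case: hQ. Qed.
Lemma subspaceD u v : Q u -> Q v -> Q (u + v). Proof. by case: hQ => _ + _; apply. Qed.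
Lemma subspaceZ c v : Q v -> Q (c *: v). Proof. by case: hQ => _ _; apply. Qed.
Lemma subspaceB u v : Q u -> Q v -> Q (u - v).
Proof. by move=> Qu Qv; rewrite -scaleN1r; apply/subspaceD/subspaceZ. Qed.

Lemma subspace_sum (I : Type) (r : seq I) (P : pred I) (F : I -> V) :
  (forall i, P i -> Q (F i)) -> Q (\sum_(i <- r | P i) F i).
Proof. by move=> QF; apply: big_ind => //; [apply: subspace0 | apply: subspaceD]. Qed.

Lemma subspace_lincomb k (c : 'I_k -> K) (t : 'I_k -> V) :
  (forall i, Q (t i)) -> Q (\sum_i c i *: t i).
Proof. by move=> Qt; apply: subspace_sum => i _; apply: subspaceZ. Qed.

End Subspace.

Section QuotientDimension.
Variables (K : fieldType) (V : lmodType K) (Q : V -> Prop).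
Hypothesis hQ : is_subspace Q.

Definition free_mod k (t : 'I_k -> V) :=
  forall c : 'I_k -> K, Q (\sum_i c i *: t i) -> forall i, c i = 0.

Lemma free_mod_le_span k m (t : 'I_k -> V) (u : 'I_m -> V) :
  (forall i, exists c : 'I_m -> K, Q (t i - \sum_j c j *: u j)) ->
  free_mod t -> (k <= m)%N.
Proof.
case/fin_all_exists=> C tu tfree; rewrite leqNgt; apply/negP=> ltmk.
pose M := \matrix_(i < k, j < m) C i j.
pose r := nz_row (kermx M).
have r_neq0 : r != 0.
  rewrite nz_row_eq0 -mxrank_eq0 mxrank_ker subn_eq0 -ltnNge.
  exact: leq_ltn_trans (rank_leq_col M) ltmk.
have rM0 : r *m M = 0 by apply/sub_kermxP; apply: nz_row_sub.
suff /tfree r0 : Q (\sum_i r 0 i *: t i).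
  by move/eqP: r_neq0; apply; apply/rowP => i; rewrite mxE r0.
have -> : \sum_i r 0 i *: t i = \sum_i r 0 i *: (t i - \sum_j C i j *: u j)
                                + \sum_j (r *m M) 0 j *: u j.
  rewrite [X in _ + X](eq_bigr (fun j => \sum_i (r 0 i * C i j) *: u j));
    last by move=> j _; rewrite !mxE scaler_suml; apply: eq_bigr => i _; rewrite mxE.
  rewrite exchange_big -big_split /=; apply: eq_bigr => i _.
  by rewrite scalerBr scaler_sumr (eq_bigr _ (fun j _ => scalerA _ _ _)) subrK.
apply: (subspaceD hQ); first exact: subspace_lincomb.
by rewrite rM0; apply: (subspace_sum hQ) => j _; rewrite mxE scale0r; apply: (subspace0 hQ).
Qed.

Lemma free_mod_le_quotdim (P : V -> Prop) k k' (t : 'I_k -> V) :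
  (forall i, P (t i)) -> free_mod t -> quotdim_is P Q k' -> (k <= k')%N.
Proof.
move=> Pt tfree [u [_ _ uspan]].
by apply: (free_mod_le_span (u := u)) tfree => i; apply: uspan.
Qed.

Lemma quotdimE (P : V -> Prop) k : quotdim_is P Q k -> quotdim P Q = k.
Proof.
have le (k1 k2 : nat) : quotdim_is P Q k1 -> quotdim_is P Q k2 -> (k1 <= k2)%N.
  by case=> t [Pt tfree _]; apply: free_mod_le_quotdim.
move=> Pk; have Pq : quotdim_is P Q (quotdim P Q) by apply: epsilon_spec; exists k.
by apply/eqP; rewrite eqn_leq !le.
Qed.

Definition fam_rcons k (t : 'I_k -> V) (v : V) (i : 'I_k.+1) : V :=
  if unlift ord_max i is Some j then t j else v.

Lemma free_mod_rcons k (t : 'I_k -> V) v :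
  free_mod t -> ~ (exists c : 'I_k -> K, Q (v - \sum_i c i *: t i)) ->
  free_mod (fam_rcons t v).
Proof.
move=> tfree v_notin c; rewrite big_ord_recr /= /fam_rcons unlift_none.
have widen_lift (i : 'I_k) : widen_ord (leqnSn k) i = lift ord_max i.
  exact/val_inj/esym/lift_max.
under eq_bigr => i _ do rewrite widen_lift liftK.
set c' := fun i => c (lift ord_max i) => Qc.
have cmax0 : c ord_max = 0.
  apply: contra_not_eq v_notin => cmax_neq0.
  exists (fun i => - (c' i / c ord_max)).
  suff -> : v - \sum_i - (c' i / c ord_max) *: t i
            = (c ord_max)^-1 *: (\sum_i c' i *: t i + c ord_max *: v).
    exact: subspaceZ.
  rewrite scalerDr scalerA mulVf // scale1r addrC scaler_sumr -sumrN.
  by congr (_ + _); apply: eq_bigr => i _; rewrite scaleNr opprK scalerA mulrC.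
move: Qc; rewrite cmax0 scale0r addr0 => /tfree c'0 i.
by case: (unliftP ord_max i) => [j ->|->].
Qed.

Lemma quotdim_is_or_extend (P : V -> Prop) k (t : 'I_k -> V) :
  (forall i, P (t i)) -> free_mod t ->
  quotdim_is P Q k \/ exists t' : 'I_k.+1 -> V, (forall i, P (t' i)) /\ free_mod t'.
Proof.
move=> Pt tfree.
case: (classic (forall v, P v -> exists c : 'I_k -> K, Q (v - \sum_i c i *: t i))).
  by left; exists t.
move=> /not_all_ex_not [v /(imply_to_and (P v)) [Pv v_notin]]; right.
exists (fam_rcons t v); split; last exact: free_mod_rcons.
by move=> i; rewrite /fam_rcons; case: unlift.
Qed.

Lemma quotdim_is_exists (P : V -> Prop) (s : seq V) :
  (forall v, P v -> inspan s v) -> exists k, quotdim_is P Q k.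
Proof.
move=> Pspan.
have free_le_size k (t : 'I_k -> V) : (forall i, P (t i)) -> free_mod t -> (k <= size s)%N.
  move=> Pt; apply: (free_mod_le_span (u := fun j => s`_j)) => i.
  by have [c ->] := Pspan _ (Pt i); exists c; rewrite subrr; apply: subspace0.
suff grow r k (t : 'I_k -> V) : (forall i, P (t i)) -> free_mod t ->
    (size s - k <= r)%N -> exists k, quotdim_is P Q k.
  by apply: (grow (size s) 0%N (fun _ => 0)); [case | move=> c _ [] | rewrite subn0].
elim: r k t => [|r IH] k t Pt tfree le_r.
all: case: (quotdim_is_or_extend Pt tfree) => [|[t' [Pt' t'free]]]; first by exists k.
all: have := free_le_size _ _ Pt' t'free.
- by move=> ?; exfalso; lia.
- by move=> ?; apply: (IH _ _ Pt' t'free); lia.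
Qed.

Lemma quotdim_spec (P : V -> Prop) (s : seq V) :
  (forall v, P v -> inspan s v) -> quotdim_is P Q (quotdim P Q).
Proof. by case/quotdim_is_exists => k Pk; rewrite (quotdimE Pk). Qed.

End QuotientDimension.

Lemma inspan_map (K : fieldType) (V : lmodType K) (T : Type) (x0 : T)
    (f : T -> V) (s : seq T) (c : T -> K) :
  inspan (map f s) (\sum_(x <- s) c x *: f x).
Proof.
rewrite /inspan size_map; exists (fun i => c (nth x0 s i)).
by rewrite (big_nth x0) big_mkord; apply: eq_bigr => i _; rewrite (nth_map x0).
Qed.

Section QuotientDimensionAdd.
Variables (K : fieldType) (V V' : lmodType K).
Variables (P Q1 Q2 : V -> Prop) (C : V' -> Prop) (phi : {linear V -> V'}).
Hypotheses (hP : is_subspace P) (hQ2 : is_subspace Q2).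
Hypothesis Q1_sub_Q2 : forall x, Q1 x -> Q2 x.
Hypothesis phi_Q1 : forall x, Q1 x -> phi x = 0.
Hypothesis Q2_ker_phi : forall x, Q2 x -> phi x = 0 -> Q1 x.
Hypothesis C_image : forall y, C y <-> exists x, [/\ P x, Q2 x & y = phi x].

(* dim (P + Q1)/Q1 = dim (P + Q2)/Q2 + dim phi(P ∩ Q2). *)
Lemma quotdim_is_add k1 k2 :
  quotdim_is P Q2 k1 -> quotdim_is C (fun y => y = 0) k2 -> quotdim_is P Q1 (k1 + k2).
Proof.
move=> [t [Pt tfree tspan]] [g [Cg gfree gspan]].
have /fin_all_exists [f fP] j : exists x, [/\ P x, Q2 x & g j = phi x] by apply/C_image.
have Q2f e : Q2 (\sum_j e j *: f j) by apply: subspace_lincomb => // j; case: (fP j).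
have phi_f e : phi (\sum_j e j *: f j) = \sum_j e j *: g j.
  by rewrite linear_sum; apply: eq_bigr => j _; rewrite linearZ; case: (fP j) => _ _ ->.
have sum_cat (c : 'I_(k1 + k2) -> K) : \sum_i c i *: fam_cat t f i =
    \sum_i c (lshift k2 i) *: t i + \sum_j c (rshift k1 j) *: f j.
  rewrite big_split_ord; congr (_ + _); apply: eq_bigr => i _.
    by rewrite fam_cat_lshift.
  by rewrite fam_cat_rshift.
exists (fam_cat t f); split.
- by move=> i; rewrite /fam_cat; case: split => x //; case: (fP x).
- move=> c; rewrite sum_cat => /[dup] Q1c /Q1_sub_Q2 Q2c.
  have /tfree c_t0 : Q2 (\sum_i c (lshift k2 i) *: t i).
    by rewrite -(addrK (\sum_j c (rshift k1 j) *: f j) (\sum_i _)); apply: subspaceB.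
  move: Q1c; rewrite big1 ?add0r => [/phi_Q1|i _]; last by rewrite c_t0 scale0r.
  rewrite phi_f => c_f0 i.
  by rewrite -(splitK i); case: (split i) => x /=; [apply: c_t0 | exact: (gfree _ c_f0 x)].
move=> v Pv; have [c1 Q2v'] := tspan v Pv; set v' := v - _ in Q2v'.
have Pv' : P v' by apply: subspaceB; [|exact: Pv|exact: subspace_lincomb].
have [e phi_v'] : exists e : 'I_k2 -> K, phi v' - \sum_j e j *: g j = 0.
  by apply: gspan; apply/C_image; exists v'.
exists (fam_cat c1 e); rewrite sum_cat.
under eq_bigr do rewrite fam_cat_lshift.
under [X in _ - (_ + X)]eq_bigr do rewrite fam_cat_rshift.
rewrite opprD addrA -/v'; apply: Q2_ker_phi; first exact: subspaceB.
by rewrite linearB phi_f.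
Qed.

End QuotientDimensionAdd.

Lemma subspace_zero (K : fieldType) (V : lmodType K) : is_subspace (fun v : V => v = 0).
Proof. by split=> [//|u v -> ->|c v ->]; rewrite ?addr0 ?scaler0. Qed.

Section MonomialFilter.
Variables (N : nat) (K : fieldType).
Implicit Types (p q : {mpoly K[N]}) (P : pred 'X_{1..N}).

Definition mfilter P p : {mpoly K[N]} := \sum_(m <- msupp p | P m) p@_m *: 'X_[m].

Lemma mcoeff_mfilter P p m0 : (mfilter P p)@_m0 = if P m0 then p@_m0 else 0.
Proof.
rewrite raddf_sum big_mkcond /=.
rewrite (eq_bigr (fun m => if P m0 then (p@_m *: 'X_[m])@_m0 else 0)); last first.
  move=> m _; rewrite mcoeffZ mcoeffX mulr_natr.
  by case: (eqVneq m m0) => [->|_]; rewrite ?mulr0n ?if_same.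
by case: ifP => _; [rewrite -raddf_sum -mpolyE | rewrite big1].
Qed.

Lemma mfilter_is_linear P : linear (mfilter P).
Proof.
move=> c p q; apply/mpolyP => m.
rewrite mcoeffD mcoeffZ !mcoeff_mfilter mcoeffD mcoeffZ.
by case: (P m); last rewrite mulr0 addr0.
Qed.

HB.instance Definition _ P :=
  GRing.isLinear.Build K {mpoly K[N]} {mpoly K[N]} _ (mfilter P) (mfilter_is_linear P).

Lemma msupp_mfilter P p m : (m \in msupp (mfilter P p)) = P m && (m \in msupp p).
Proof. by rewrite !mcoeff_msupp mcoeff_mfilter; case: (P m); last rewrite eqxx. Qed.

Lemma msupp_sub_mfilter P p m :
  (m \in msupp (p - mfilter P p)) = ~~ P m && (m \in msupp p).
Proof.
rewrite !mcoeff_msupp mcoeffB mcoeff_mfilter.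
by case: (P m); [rewrite subrr eqxx | rewrite subr0].
Qed.

Lemma eq_in_mfilter P P' p : {in msupp p, P =1 P'} -> mfilter P p = mfilter P' p.
Proof. by move=> eqP'; rewrite /mfilter -big_filter -[RHS]big_filter (eq_in_filter eqP'). Qed.

Lemma mfilter_id P p : {in msupp p, forall m, P m} -> mfilter P p = p.
Proof. by move=> Pp; rewrite (@eq_in_mfilter _ predT) // [RHS]mpolyE. Qed.

Lemma mfilter_eq0 P p : {in msupp p, forall m, ~~ P m} -> mfilter P p = 0.
Proof.
move=> nPp; rewrite (@eq_in_mfilter _ pred0) => [|m /nPp /negbTE //].
exact: big_pred0_eq.
Qed.

End MonomialFilter.

Lemma monspan_subspace {N : nat} {K : fieldType} {M : 'X_{1..N} -> Prop} :
  is_subspace (monspan (K := K) M).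
Proof.
split=> [m|p q Mp Mq m /msuppD_le|c p Mp m /msuppZ_le]; first by rewrite msupp0.
  by rewrite mem_cat => /orP [/Mp|/Mq].
exact: Mp.
Qed.

Lemma monspanW (N : nat) (K : fieldType) (M M' : 'X_{1..N} -> Prop) (p : {mpoly K[N]}) :
  (forall m, M m -> M' m) -> monspan M p -> monspan M' p.
Proof. by move=> MM' Mp m /Mp /MM'. Qed.

Section Weights.
Variables (N : nat) (K : fieldType).
Implicit Types (p q : {mpoly K[N]}) (u : 'I_N -> int).

Lemma mweight0 u : mweight u 0%MM = 0.
Proof. by rewrite /mweight big1 // => i _; rewrite mnm0E mulr0. Qed.

Lemma mweightD u m1 m2 : mweight u (m1 + m2)%MM = mweight u m1 + mweight u m2.
Proof.
by rewrite /mweight -big_split; apply: eq_bigr => i _; rewrite mnmDE PoszD mulrDr.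
Qed.

Lemma mweightU u i : mweight u U_(i)%MM = u i.
Proof.
rewrite /mweight (bigD1 i) //= mnm1E eqxx mulr1 big1 ?addr0 // => j /negbTE ji.
by rewrite mnm1E eq_sym ji mulr0.
Qed.

Lemma mweight_const (c : int) (m : 'X_{1..N}) :
  mweight (fun _ => c) m = c * (mdeg m)%:Z.
Proof. by rewrite /mweight mdegE -mulr_sumr (big_morph Posz PoszD erefl). Qed.

Definition weight_ge u (a : int) : {mpoly K[N]} -> Prop :=
  monspan (fun m => a <= mweight u m).

Lemma weight_ge_subspace u a : is_subspace (weight_ge u a).
Proof. exact: monspan_subspace. Qed.

Lemma weight_geW u a b p : b <= a -> weight_ge u a p -> weight_ge u b p.
Proof. by move=> ba; apply: monspanW => m; apply: le_trans. Qed.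

Lemma weight_geX u m : weight_ge u (mweight u m) 'X_[m].
Proof. by move=> m'; rewrite msuppX mem_seq1 => /eqP ->. Qed.

Lemma weight_geM u a b p q :
  weight_ge u a p -> weight_ge u b q -> weight_ge u (a + b) (p * q).
Proof.
move=> up uq m /msuppM_le /allpairsP [[m1 m2] /= [/up le1 /uq le2 ->]].
by rewrite mweightD lerD.
Qed.

Lemma weight_ge_exp u a p k : weight_ge u a p -> weight_ge u (a * k%:Z) (p ^+ k).
Proof.
move=> up; elim: k => [|k IHk].
  by rewrite mulr0 expr0 -mpolyX0 -(mweight0 u); apply: weight_geX.
by rewrite exprS -addn1 PoszD mulrDr mulr1 addrC; apply: weight_geM.
Qed.

Lemma weight_ge_comp (u v : 'I_N -> int) a p (lq : N.-tuple {mpoly K[N]}) :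
  weight_ge v a p -> (forall j, weight_ge u (v j) (tnth lq j)) ->
  weight_ge u a (p \mPo lq).
Proof.
move=> vp ulq; rewrite comp_mpolyE big_seq.
apply: (subspace_sum (weight_ge_subspace u a)) => m /vp le_a_m.
apply: (subspaceZ (weight_ge_subspace u a)); apply: weight_geW le_a_m _.
apply: (big_ind2 (weight_ge u)) => [|x1 x2 y1 y2|j _]; last exact: weight_ge_exp.
  by rewrite -mpolyX0 -(mweight0 u); apply: weight_geX.
exact: weight_geM.
Qed.

End Weights.

Lemma comp_mpoly_comp (N : nat) (K : fieldType) (p : {mpoly K[N]})
    (lq lr : N.-tuple {mpoly K[N]}) :
  (p \mPo lq) \mPo lr = p \mPo [tuple tnth lq i \mPo lr | i < N].
Proof.
rewrite (comp_mpolyEX p lq) (comp_mpolyEX p) raddf_sum /=; apply: eq_bigr => m _.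
rewrite comp_mpolyZ !comp_mpolyX rmorph_prod /=; congr (_ *: _).
by apply: eq_bigr => i _; rewrite rmorphXn tnth_mktuple.
Qed.

Lemma inspan_monomials (N : nat) (K : fieldType) k (p : {mpoly K[N]}) :
  (forall m, m \in msupp p -> (mdeg m < k)%N) ->
  inspan [seq 'X_[m] | m <- map val (enum {: 'X_{1..N < k}})] p.
Proof.
move=> ltk; have : (msize p <= k)%N by rewrite msizeE; apply/bigmax_leqP_seq => m /ltk.
move/mpolywE => ->.
suff -> : \sum_(m : 'X_{1..N < k}) p@_m *: 'X_[m]
        = \sum_(m <- map val (enum {: 'X_{1..N < k}})) p@_m *: 'X_[m].
  exact: (inspan_map 0%MM).
by rewrite big_map big_enum.
Qed.

Lemma quotdim_spec_Ad (N : nat) (K : fieldType) d (P Q : {mpoly K[N]} -> Prop) :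
  is_subspace Q -> (forall p, P p -> in_Ad d p) -> quotdim_is P Q (quotdim P Q).
Proof.
move=> hQ PAd; apply: (quotdim_spec hQ) => p /PAd Adp.
by apply: (inspan_monomials (k := d.+1)) => m /Adp ->.
Qed.

Lemma span_S_subspace (N : nat) (K : fieldType) w d a :
  is_subspace (span_S (n := N) (K := K) w d a).
Proof. exact: monspan_subspace. Qed.

Section InitialSpace.
Variables (N : nat) (K : fieldType) (w : 'I_N -> int) (d : nat).
Local Notation A := {mpoly K[N]}.
Local Notation wt := (mweight w).
Local Notation wcomp a := (mfilter (fun m => wt m == a)).
Variable W : A -> Prop.
Hypothesis hW : is_subspace W.
Hypothesis hWd : forall p, W p -> in_Ad d p.

Lemma init_formE (f : A) :
  init_form w f = mfilter (fun m => all (fun m' => wt m' <= wt m) (msupp f)) f.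
Proof. by []. Qed.

Lemma wcomp_init_form a (f : A) : wcomp a (init_form w f) =
  if all (fun m => wt m <= a) (msupp f) then wcomp a f else 0.
Proof.
apply/mpolyP => m; rewrite (fun_if (mcoeff m)) mcoeff0 init_formE !mcoeff_mfilter.
by case: eqP => [->|_]; last rewrite if_same.
Qed.

Lemma init_space_wcomp a (f : A) :
  W f -> monspan (fun m => wt m <= a) f -> init_space w W (wcomp a f).
Proof.
move=> Wf le_a.
case: (boolP (has (fun m => wt m == a) (msupp f))) => [/hasP [m1 m1f /eqP wt_m1]|no_a].
  exists [:: init_form w f]; split=> [g|]; first by rewrite mem_seq1 => /eqP ->; exists f.
  exists (fun _ => 1); rewrite big_ord1 scale1r init_formE /=.
  apply: eq_in_mfilter => m mf /=; apply/eqP/allP => [->|le_m]; first exact: le_a.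
  by apply/le_anti; rewrite le_a //= -wt_m1 le_m.
rewrite mfilter_eq0 => [|m mf]; last by apply: contra no_a => wt_m; apply/hasP; exists m.
by exists [::]; split=> //; exists (fun _ => 0); rewrite big_ord0.
Qed.

Lemma weight_comp_init_spaceP a (h : A) :
  weight_comp w a (init_space w W) h <->
  exists F, [/\ W F, span_S w d (a + 1) F & h = wcomp a F].
Proof.
split=> [[[s [Fs [c h_def]]] homog_h]|[F [WF SF ->]]]; last first.
  split; first by apply: init_space_wcomp (monspanW _ SF) => // m [_]; rewrite ltzD1.
  by move=> m; rewrite msupp_mfilter => /andP [/eqP].
have /fin_all_exists [F F_def] (i : 'I_(size s)) : exists F, W F /\ s`_i = init_form w F.
  exact/Fs/mem_nth.
pose c' i := if all (fun m => wt m <= a) (msupp (F i)) then c i else 0.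
exists (\sum_i c' i *: F i); split.
- by apply: subspace_lincomb => // i; case: (F_def i).
- rewrite /span_S; apply: (subspace_sum monspan_subspace) => i _; rewrite /c'.
  case: ifP => [/allP le_a|_]; last by rewrite scale0r; apply: subspace0 monspan_subspace.
  apply: (subspaceZ monspan_subspace) => m mF.
  by split; [apply: hWd mF; case: (F_def i) | rewrite ltzD1; apply: le_a].
rewrite -(mfilter_id (P := fun m => wt m == a) (p := h)) => [|m /homog_h ->//].
rewrite h_def !linear_sum; apply: eq_bigr => i _.
rewrite !linearZ /=; case: (F_def i) => _ ->; rewrite wcomp_init_form /c'.
by case: ifP; rewrite ?scaler0 ?scale0r.
Qed.

Lemma rkS_succ a :
  rkS w d a W = (rkS w d (a + 1) W + dimK (weight_comp w a (init_space w W)))%N.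
Proof.
have Wrk := quotdim_spec_Ad (span_S_subspace K w d (a + 1)) hWd.
have Cdim : quotdim_is (weight_comp w a (init_space w W)) (fun v => v = 0)
                       (dimK (weight_comp w a (init_space w W))).
  apply: (quotdim_spec_Ad (subspace_zero A)) => h /weight_comp_init_spaceP [F [WF _ ->]] m.
  by rewrite msupp_mfilter => /andP [_]; apply: hWd.
rewrite /rkS; apply: (quotdimE (span_S_subspace K w d a)).
apply: (quotdim_is_add (phi := wcomp a) hW (span_S_subspace K w d (a + 1)) _ _ _ _ Wrk Cdim).
- by move=> x; apply: monspanW => m [dm lt_a]; split; rewrite ?ltzD1 ?ltW.
- by move=> x Sx; apply: mfilter_eq0 => m /Sx [_]; apply: contraTN => /eqP ->; rewrite ltxx.
- move=> x Sx phix0 m mx; have [dm] := Sx m mx; rewrite ltzD1 le_eqVlt => /orP [/eqP wt_a|//].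
  by move: (msupp_mfilter (fun m => wt m == a) x m); rewrite phix0 msupp0 wt_a eqxx mx.
- exact: weight_comp_init_spaceP.
Qed.

End InitialSpace.

Section LinearChangeOfCoordinates.
Variables (N : nat) (K : fieldType).
Implicit Types (p : {mpoly K[N]}) (b : 'M[K]_N) (u : 'I_N -> int).

Lemma bactM b b' p : bact b' (bact b p) = bact (b' *m b) p.
Proof.
rewrite /bact comp_mpoly_comp; congr (p \mPo _); apply: eq_from_tnth => j.
rewrite !tnth_mktuple raddf_sum /=.
under eq_bigr => i _ do rewrite comp_mpolyZ comp_mpolyXU -tnth_nth tnth_mktuple scaler_sumr.
rewrite exchange_big /=; apply: eq_bigr => l _.
by rewrite mxE scaler_suml; apply: eq_bigr => i _; rewrite scalerA mulrC.
Qed.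

Lemma bact1 p : bact 1%:M p = p.
Proof.
rewrite /bact -[RHS]comp_mpoly_id; congr (p \mPo _); apply: eq_from_tnth => j.
rewrite !tnth_mktuple (bigD1 j) //= big1 => [|i /negbTE ij]; last by rewrite mxE ij scale0r.
by rewrite mxE eqxx scale1r addr0.
Qed.

Lemma bactK b p : b \in unitmx -> bact (invmx b) (bact b p) = p.
Proof. by move=> bu; rewrite bactM mulVmx // bact1. Qed.

Lemma weight_ge_linear_form u a (c : 'I_N -> K) :
  (forall i, c i != 0 -> a <= u i) -> weight_ge u a (\sum_i c i *: 'X_i).
Proof.
move=> le_a; apply: (subspace_sum (weight_ge_subspace K u a)) => i _.
have [->|/le_a le_ai] := eqVneq (c i) 0.
  by rewrite scale0r; apply: subspace0 (weight_ge_subspace K u a).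
apply: (subspaceZ (weight_ge_subspace K u a)); apply: weight_geW le_ai _.
by rewrite -(mweightU u i); apply: weight_geX.
Qed.

Lemma weight_ge_bact u v a b p :
  (forall j, weight_ge u (v j) (\sum_i b i j *: 'X_i)) ->
  weight_ge v a p -> weight_ge u a (bact b p).
Proof. by move=> ub vp; apply: weight_ge_comp vp _ => j; rewrite tnth_mktuple. Qed.

(* mdeg is the weight for the constant weights 1 and -1, and a linear
   substitution lowers neither of them. *)
Lemma in_Ad_bact b d p : in_Ad d p -> in_Ad d (bact b p).
Proof.
move=> Adp m mb.
have const_form (c : int) j : weight_ge (fun _ => c) c (\sum_i b i j *: 'X_i).
  exact: weight_ge_linear_form.
have le_deg (c : int) : c * d%:Z <= c * (mdeg m)%:Z.
  rewrite -mweight_const; apply: (weight_ge_bact (const_form c)) mb.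
  by move=> m' /Adp; rewrite mweight_const => ->.
move: (le_deg 1) (le_deg (-1)); rewrite !mul1r !mulN1r lerN2 => le1 le2.
by apply/eqP; rewrite -eqz_nat eq_le le1 le2.
Qed.

End LinearChangeOfCoordinates.

Section BorelRank.
Variables (N : nat) (K : fieldType) (w : 'I_N -> int) (d : nat).
Local Notation A := {mpoly K[N]}.
Local Notation wt := (mweight w).
Variable W : A -> Prop.
Hypothesis hW : is_subspace W.
Hypothesis hWd : forall p, W p -> in_Ad d p.
Hypothesis w_nonincr : forall i j : 'I_N, (i <= j)%N -> w j <= w i.

Lemma weight_ge_bact_borel (b : 'M[K]_N) a p :
  borel b -> weight_ge w a p -> weight_ge w a (bact b p).
Proof.
case=> _ b_upper; apply: weight_ge_bact => j; apply: weight_ge_linear_form => i.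
by move=> bij; apply: w_nonincr; rewrite leqNgt; apply: contra bij => /b_upper ->.
Qed.

Lemma w_homog_space_mfilter (pw : pred int) f :
  w_homog_space w W -> W f -> W (mfilter (fun m => pw (wt m)) f).
Proof.
move=> homW /homW [s [Ws [c ->]]]; rewrite linear_sum; apply: subspace_sum => // i _.
rewrite linearZ /=; apply: subspaceZ => //; have [Wg homg] := Ws _ (mem_nth 0 (ltn_ord i)).
case: (boolP (has (fun m => pw (wt m)) (msupp s`_i))) => [/hasP [m0 m0s pw_m0]|no_pw].
  by rewrite mfilter_id // => m ms /=; rewrite (homg m m0).
rewrite mfilter_eq0; first exact: subspace0 hW.
by move=> m ms; apply: contra no_pw => pw_m; apply/hasP; exists m.
Qed.

Lemma in_Ad_bimage (b : 'M[K]_N) q : bimage b W q -> in_Ad d q.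
Proof. by case=> p [Wp ->]; apply/in_Ad_bact/hWd. Qed.

Lemma rkS_le_bimage (b : 'M[K]_N) a :
  w_homog_space w W -> borel b -> (rkS w d a W <= rkS w d a (bimage b W))%N.
Proof.
move=> homW bB; pose high p : A := mfilter (fun m => a <= wt m) p.
have [t [Wt tfree _]] := quotdim_spec_Ad (span_S_subspace K w d a) hWd.
rewrite /rkS; apply: (free_mod_le_quotdim (span_S_subspace K w d a) (P := bimage b W)
                                           (t := fun i => bact b (high (t i)))).
- by move=> i; exists (high (t i)); split; [apply: w_homog_space_mfilter |].
- move=> c Sc; set f := \sum_i c i *: high (t i).
  have bf : bact b f = \sum_i c i *: bact b (high (t i)).
    by rewrite /bact linear_sum; apply: eq_bigr => i _; rewrite linearZ.
  have bf0 : bact b f = 0.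
    have f_ge : weight_ge w a f.
      apply: (subspace_lincomb (weight_ge_subspace K w a)) => i m.
      by rewrite msupp_mfilter => /andP [].
    apply/mpolyP => m; rewrite mcoeff0; apply/eqP; rewrite mcoeff_eq0; apply/negP => mb.
    have := weight_ge_bact_borel bB f_ge mb; rewrite bf in mb.
    by have [_ lt_a] := Sc m mb; rewrite leNgt lt_a.
  have f0 : f = 0 by rewrite -(bactK f bB.1) bf0 /bact comp_mpoly0.
  apply: tfree; suff -> : \sum_i c i *: t i = f + \sum_i c i *: (t i - high (t i)).
    rewrite f0 add0r; apply: (subspace_lincomb (span_S_subspace K w d a)) => i m.
    by rewrite msupp_sub_mfilter -ltNge => /andP [lt_a /(hWd (Wt i)) dm].
  by rewrite /f -big_split /=; apply: eq_bigr => i _; rewrite scalerBr addrC subrK.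
exact: (quotdim_spec_Ad (span_S_subspace K w d a) (@in_Ad_bimage b)).
Qed.

End BorelRank.

Theorem proposition3p1 (K : fieldType) (n : nat) (d : nat)
    (W : {mpoly K[n.+1]} -> Prop) (w : 'I_n.+1 -> int) :
  (0 < d)%N ->
  is_subspace W -> (forall p, W p -> in_Ad d p) ->
  (forall i j : 'I_n.+1, (i <= j)%N -> w j <= w i) ->
  (forall i, 0 <= w i) ->
  (forall a : int, 0 <= a <= w ord0 * d%:Z ->
     (dimK (weight_comp w a (init_space w W)))%:Z
       = (rkS w d a W)%:Z - (rkS w d (a + 1) W)%:Z)
  /\
  (w_homog_space w W -> forall b : 'M[K]_n.+1, borel b ->
     forall a : int, 1 <= a <= w ord0 * d%:Z ->
       (rkS w d a W <= rkS w d a (bimage b W))%N).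
Proof.
move=> _ hW hWd w_nonincr _; split=> [a _ | homW b bB a _].
  by rewrite (rkS_succ w hW hWd a) PoszD addrAC subrr add0r.
exact: rkS_le_bimage.
Qed.
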